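(* Suppose that $\mathcal L,\mathcal K,\mathscr J_1,\mathscr J_2$ are subsets of $\{1,\dots,n\}$ such that $\mathcal K\supseteq\mathscr J_1\cup\mathscr J_2$ and $\mathcal L\supseteq\mathscr J_1\cap\mathscr J_2\cap\mathcal K$. Then $$L_{\mathscr J_1}\cdot L_{\mathscr J_2}\subseteq L_{\mathcal L}+I(A_{\mathcal K}).$$
   Context: $\mathbb K$ is a field, $R=\mathbb K[x_{i_1,\dots,i_n}:1\le i_j\le a_j]$, $A=(x_{i_1,\dots,i_n})$ the generic $a_1\times\dots\times a_n$ table. For a tuple $\sigma$ with $\sigma_j\in\{1,\dots,a_j\}\cup\{+\}$, $x_\sigma$ is the sum of all $x_{i_1,\dots,i_n}$ with $i_j=\sigma_j$ whenever $\sigma_j\ne+$. For $\mathscr J=\{j_1<\dots<j_m\}\subseteq\{1,\dots,n\}$ the margin $A_{\mathscr J}$ is the table whose $(i_1,\dots,i_m)$ entry is $x_\sigma$ with $\sigma_{j_r}=i_r$, $\sigma_j=+$ for $j\notin\mathscr J$; $L_{\mathscr J}$ is the ideal of $R$ generated by the entries of $A_{\mathscr J}$. For a table $B$ with entries in $R$, $I(B)$ is the ideal generated by all generalized $2\times2$ minors of $B$, i.e. determinants $\det\begin{pmatrix} b_{i_1,\dots,i_m} & b_{j_1,\dots,j_{l-1},i_l,j_{l+1},\dots,j_m}\\ b_{i_1,\dots,i_{l-1},j_l,i_{l+1},\dots,i_m} & b_{j_1,\dots,j_m}\end{pmatrix}$. *)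

From HB Require Import structures.
From mathcomp Require Import all_boot all_order all_algebra.
From mathcomp Require Import mpoly.
Set Implicit Arguments. Unset Strict Implicit. Unset Printing Implicit Defensive.
Import GRing.Theory.
Local Open Scope ring_scope.

(* Cell indices of the generic a_1 x ... x a_n table (0-based:
   coordinate j ranges over 'I_(a j) instead of {1,..,a_j}). *)
Definition cell (n : nat) (a : 'I_n -> nat) : finType :=
  {dffun forall j : 'I_n, 'I_(a j)}.

(* The polynomial ring R = K[x_t : t cell], variables indexed via enum_rank. *)
Definition polyR (K : fieldType) (n : nat) (a : 'I_n -> nat) :=
  {mpoly K[#|cell a|]}.

Definition xvar (K : fieldType) (n : nat) (a : 'I_n -> nat) (t : cell a)
  : polyR K a := 'X_(enum_rank t).

(* Entry of the margin A_J at (the J-coordinates of) t: the sum of x_u over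
   all cells u agreeing with t on the coordinates in J.  It only depends on
   the coordinates of t in J, so {margin J t | t} is exactly the set of
   entries of A_J. *)
Definition margin (K : fieldType) (n : nat) (a : 'I_n -> nat)
  (J : {set 'I_n}) (t : cell a) : polyR K a :=
  \sum_(u : cell a | [forall j in J, u j == t j]) xvar K u.

Definition setcoord (n : nat) (a : 'I_n -> nat) (s : cell a) (l : 'I_n)
  (t : cell a) : cell a :=
  [ffun k => if k == l then t k else s k].

Definition ideal_gen (R : comPzRingType) (S : R -> Prop) (p : R) : Prop :=
  exists s : seq (R * R),
    (forall q, q \in s -> S q.2) /\ p = \sum_(q <- s) q.1 * q.2.

Definition ideal_add (R : comPzRingType) (I J : R -> Prop) : R -> Prop :=
  ideal_gen (fun p => I p \/ J p).

Definition ideal_mul (R : comPzRingType) (I J : R -> Prop) : R -> Prop :=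
  ideal_gen (fun p => exists x y, I x /\ J y /\ p = x * y).

Definition Lideal (K : fieldType) (n : nat) (a : 'I_n -> nat)
  (J : {set 'I_n}) : polyR K a -> Prop :=
  ideal_gen (fun p => exists t : cell a, p = margin K J t).

(* Generalized 2x2 minor of A_Kc: for cells i, j and a direction l in Kc,
   det [[b_i, b_{j[l:=i_l]}], [b_{i[l:=j_l]}, b_j]]. *)
Definition gen_minor (K : fieldType) (n : nat) (a : 'I_n -> nat)
  (Kc : {set 'I_n}) (i j : cell a) (l : 'I_n) : polyR K a :=
  margin K Kc i * margin K Kc j
  - margin K Kc (setcoord j l i) * margin K Kc (setcoord i l j).

Definition Iminors (K : fieldType) (n : nat) (a : 'I_n -> nat)
  (Kc : {set 'I_n}) : polyR K a -> Prop :=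
  ideal_gen (fun p => exists (i j : cell a) (l : 'I_n),
                        l \in Kc /\ p = gen_minor K Kc i j l).

Arguments xvar K {n a} t.
Arguments margin K {n a} J t.
Arguments Lideal K {n a} J _.
Arguments gen_minor K {n a} Kc i j l.
Arguments Iminors K {n a} Kc _.

From HB Require Import structures.
From mathcomp Require Import all_boot all_order all_algebra.
From mathcomp Require Import mpoly.

(* Both ideals are generated by margins, so it suffices to treat a product
   b_J1(s) * b_J2(t) of two margin entries.  Since J1 and J2 lie in Kc, each
   factor is a sum of entries b_Kc(k) of the finer margin A_Kc, and the
   product is a sum of products b_Kc(k) * b_Kc(k').  Modulo I(A_Kc) we may
   exchange the coordinates of k and k' in D = J2 \ J1 one at a time, since
   every single exchange is a generalized 2x2 minor.  After the exchange the
   second factor only remembers the coordinates of t on J1 :&: J2, so the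
   sum factors as (a sum of entries of A_Kc) * b_(J1 :&: J2)(t), and the
   last factor lies in L_L because J1 :&: J2 is contained in L. *)

Set Implicit Arguments. Unset Strict Implicit. Unset Printing Implicit Defensive.
Import GRing.Theory.
Local Open Scope ring_scope.

Section Ideals.
Variable R : comPzRingType.

Definition is_ideal (I : R -> Prop) :=
  [/\ I 0, forall x y, I x -> I y -> I (x + y) & forall r x, I x -> I (r * x)].

Lemma ideal_gen_is_ideal (S : R -> Prop) : is_ideal (ideal_gen S).
Proof.
split.
- by exists [::]; rewrite big_nil.
- move=> _ _ [s1 [S1 ->]] [s2 [S2 ->]]; exists (s1 ++ s2).
  by split=> [q|]; rewrite ?big_cat // mem_cat => /orP[/S1|/S2].
- move=> r _ [s [Ss ->]]; exists [seq (r * q.1, q.2) | q <- s]; split.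
    by move=> q /mapP[q' /Ss + ->].
  by rewrite big_map mulr_sumr; apply: eq_bigr => q _; rewrite mulrA.
Qed.

Lemma mem_ideal_gen (S : R -> Prop) x : S x -> ideal_gen S x.
Proof.
move=> Sx; exists [:: (1, x)].
by split=> [q|]; rewrite ?big_seq1 ?mul1r // inE => /eqP ->.
Qed.

Lemma ideal_gen_min (S I : R -> Prop) : is_ideal I -> (forall x, S x -> I x) ->
  forall p, ideal_gen S p -> I p.
Proof.
move=> [I0 ID IM] SI _ [s [Ss ->]]; elim: s Ss => [|q s IHs] Ss.
  by rewrite big_nil.
rewrite big_cons; apply: ID; first by apply/IM/SI/Ss; rewrite inE eqxx.
by apply: IHs => q' q's; apply: Ss; rewrite inE q's orbT.
Qed.

Lemma ideal_sum (I : R -> Prop) (T : finType) (P : pred T) (F : T -> R) :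
  is_ideal I -> (forall i, P i -> I (F i)) -> I (\sum_(i | P i) F i).
Proof. by move=> [I0 ID _] IF; apply: big_ind. Qed.

Lemma ideal_mul_preim (I : R -> Prop) x : is_ideal I -> is_ideal (fun y => I (x * y)).
Proof.
move=> [I0 ID IM]; split=> [|y1 y2 Iy1 Iy2|r y Iy]; first by rewrite mulr0.
  by rewrite mulrDr; apply: ID.
by rewrite mulrCA; apply: IM.
Qed.

Lemma ideal_mul_gen_min (S T I : R -> Prop) : is_ideal I ->
  (forall x y, S x -> T y -> I (x * y)) ->
  forall p, ideal_mul (ideal_gen S) (ideal_gen T) p -> I p.
Proof.
move=> idI ST; apply: ideal_gen_min => // _ [x [y [Sx [Ty ->]]]].
have genS_T y' : T y' -> I (x * y').
  move=> Ty'; rewrite mulrC; apply: (ideal_gen_min (ideal_mul_preim y' idI)) Sx.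
  by move=> x' Sx'; rewrite mulrC; apply: ST.
exact: (ideal_gen_min (ideal_mul_preim x idI)) Ty.
Qed.

End Ideals.

Section Margins.
Variables (K : fieldType) (n : nat) (a : 'I_n -> nat).
Implicit Types (A D J Kc L : {set 'I_n}) (k s t u v : cell a).

Local Notation b := (margin K).

Definition agree A u v := [forall j in A, u j == v j].

Lemma agreeP A u v : reflect {in A, forall j, u j = v j} (agree A u v).
Proof.
apply: (iffP forall_inP) => uv j /uv; first exact/eqP.
by move->.
Qed.

Lemma agreeU A D u v : agree (A :|: D) u v = agree A u v && agree D u v.
Proof.
apply/agreeP/andP => [uv|[/agreeP uvA /agreeP uvD] j].
  by split; apply/agreeP => j j_in; apply: uv; rewrite inE j_in ?orbT.
by rewrite inE => /orP[/uvA|/uvD].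
Qed.

Definition splice D k k' : cell a := [ffun j => if j \in D then k' j else k j].

Lemma spliceE D k k' j : splice D k k' j = if j \in D then k' j else k j.
Proof. by rewrite ffunE. Qed.

Lemma splice0 k k' : splice set0 k k' = k.
Proof. by apply/ffunP => j; rewrite spliceE in_set0. Qed.

Lemma spliceK D k k' : splice D (splice D k k') (splice D k' k) = k.
Proof. by apply/ffunP => j; rewrite !spliceE; case: (j \in D). Qed.

Lemma agree_splice_out A D k k' v :
  [disjoint A & D] -> agree A (splice D k k') v = agree A k v.
Proof.
move=> AD; apply: eq_forallb_in => j jA.
by rewrite spliceE (disjointFr AD jA).
Qed.

Lemma agree_splice_in A D k k' v :
  A \subset D -> agree A (splice D k k') v = agree A k' v.
Proof. by move=> AD; apply: eq_forallb_in => j jA; rewrite spliceE (subsetP AD). Qed.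

(* Coordinates outside Kc are pinned to those of the arbitrary cell s, so that
   every entry of A_Kc is counted exactly once. *)
Lemma margin_refine Kc J s t : J \subset Kc ->
  b J t = \sum_(k | agree (~: Kc) k s && agree J k t) b Kc k.
Proof.
move=> JKc; rewrite /margin (exchange_big_dep (fun u => agree J u t)) /=; last first.
  move=> k u /andP[_ /agreeP kt] /agreeP uk; apply/agreeP => j jJ.
  by rewrite uk ?kt // (subsetP JKc).
apply: eq_bigr => u ut; rewrite (big_pred1 (splice (~: Kc) u s)) // => k /=.
apply/idP/eqP => [/andP[/andP[/agreeP ks _] /agreeP uk]|->].
  apply/ffunP => j; rewrite spliceE; case: ifP => [/ks //|].
  by rewrite in_setC => /negbFE/uk.
have JKcC : [disjoint J & ~: Kc] by rewrite disjoints_subset setCK.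
rewrite agree_splice_in // agree_splice_out // [agree J u t]ut andbT.
apply/andP; split; first exact/agreeP.
by apply/agreeP => j; rewrite spliceE inE => ->.
Qed.

Lemma margin_mem_Lideal L J t : J \subset L -> Lideal K L (b J t).
Proof.
move=> JL; rewrite (margin_refine t t JL).
by apply: ideal_sum (ideal_gen_is_ideal _) _ => k _; apply: mem_ideal_gen; exists k.
Qed.

Lemma splice_minor Kc D k k' : D \subset Kc ->
  Iminors K Kc (b Kc k * b Kc k' - b Kc (splice D k k') * b Kc (splice D k' k)).
Proof.
have [m] := ubnP #|D|; elim: m D => // m IHm D; rewrite ltnS => Dm DKc.
have [I0 ID _] : is_ideal (@Iminors K n a Kc) := ideal_gen_is_ideal _.
have [->|[l lD]] := set_0Vmem D; first by rewrite !splice0 subrr.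
pose i := splice (D :\ l) k k'; pose j := splice (D :\ l) k' k.
rewrite -[_ - _](subrKA (b Kc i * b Kc j)); apply: ID.
  apply: IHm; last by rewrite (subset_trans (subD1set D l)).
  by rewrite (leq_trans _ Dm) // (cardsD1 l D) lD.
(* exchanging coordinate l of i and j is a single generalized minor *)
apply: mem_ideal_gen; exists i, j, l; split; first exact: (subsetP DKc).
rewrite /gen_minor [X in _ - X]mulrC; congr (_ - _ * _); congr (b Kc _).
  all: apply/ffunP => x; rewrite /setcoord /i /j !ffunE in_setD1.
  all: by case: eqP => [->|]; rewrite ?lD.
Qed.

Lemma margin_mul_mem L Kc J1 J2 s t :
  J1 :|: J2 \subset Kc -> J1 :&: J2 :&: Kc \subset L ->
  ideal_add (Lideal K L) (Iminors K Kc) (b J1 s * b J2 t).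
Proof.
rewrite subUset => /andP[J1Kc J2Kc] J12L.
set D := J2 :\: J1; set M := J1 :&: J2.
have DKc : D \subset Kc by rewrite (subset_trans (subsetDl _ _)).
have MKc : M \subset Kc by rewrite (subset_trans (subsetIl _ _)).
have ML : M \subset L by rewrite -(setIidPl MKc).
have [_ ID IM] : is_ideal (ideal_add (@Lideal K n a L) (Iminors K Kc)).
  exact: ideal_gen_is_ideal.
pose P1 k := [&& agree (~: Kc) k s, agree J1 k s & agree D k t].
pose P2 k := agree (~: Kc) k s && agree M k t.
rewrite (margin_refine s s J1Kc) (margin_refine s t J2Kc) big_distrlr pair_big /=.
set S := (X in \sum_(p | X p) _).
set F := fun p : cell a * cell a => b Kc (splice D p.1 p.2) * b Kc (splice D p.2 p.1).
have SE k k' : S (k, k') = P1 (splice D k k') && P2 (splice D k' k).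
  have outD : [disjoint ~: Kc & D] by rewrite disjoint_sym disjoints_subset setCK.
  have J1D : [disjoint J1 & D] by rewrite disjoints_subset setCD subsetUr.
  have MD : [disjoint M & D].
    by rewrite disjoints_subset setCD (subset_trans (subsetIl _ _)) ?subsetUr.
  have J2E : J2 = D :|: M by rewrite /D /M setUC setIC setID.
  rewrite /S /P1 /P2 /= [agree D _ t]agree_splice_in // !agree_splice_out //.
  rewrite J2E agreeU.
  by case: (agree _ k s); case: (agree _ k s); case: (agree _ k' s);
    case: (agree D k' t); case: (agree M k' t).
have prodE : \sum_(p | S p) F p = (\sum_(k | P1 k) b Kc k) * b M t.
  rewrite (margin_refine s t MKc) big_distrlr pair_big /=.
  have spliceI : involutive (fun p => (splice D p.1 p.2, splice D p.2 p.1)).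
    by case=> k k'; rewrite /= !spliceK.
  by rewrite [RHS](reindex_inj (inv_inj spliceI)); apply: eq_big => -[k k'] //; rewrite SE.
rewrite -(subrK (\sum_(p | S p) F p) (\sum_(p | S p) b Kc p.1 * b Kc p.2)) -sumrB prodE.
apply: ID.
  by apply: ideal_sum (ideal_gen_is_ideal _) _ => -[k k'] _; apply/mem_ideal_gen;
    right; apply: splice_minor.
by apply/IM/mem_ideal_gen; left; apply: margin_mem_Lideal.
Qed.

End Margins.

Theorem proposition6p1 (K : fieldType) (n : nat) (a : 'I_n -> nat)
  (L Kc J1 J2 : {set 'I_n}) :
  (J1 :|: J2) \subset Kc ->
  (J1 :&: J2 :&: Kc) \subset L ->
  forall p : polyR K a,
    ideal_mul (Lideal K J1) (Lideal K J2) p ->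
    ideal_add (Lideal K L) (Iminors K Kc) p.
Proof.
move=> J12Kc J12L; apply: ideal_mul_gen_min; first exact: ideal_gen_is_ideal.
by move=> _ _ [s ->] [t ->]; apply: margin_mul_mem.
Qed.
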